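(* Let $\mathcal{C}\subseteq[q]^{\tilde{n}}$ be an $(\tilde{n},k,\tilde{d})_q$ error-correcting code and $u>0$ an integer. Let $M$ be the $m\times n$ Boolean matrix, $n=q^k$, $m=\tilde{n}q^u$, constructed as follows: let $\varphi\colon[q]\to\{0,1\}^{q^u}$ map $x$ to the vector indexed by $u$-tuples $(a_1,\dots,a_u)\in[q]^u$ having a 1 at $(a_1,\dots,a_u)$ iff $a_i=x$ for some $i\in[u]$; arrange all codewords of $\mathcal{C}$ as the columns of an $\tilde{n}\times q^k$ matrix $M'$ over $[q]$ and replace each entry $x$ of $M'$ by the column $\varphi(x)$. Then $M$ is strongly $(d,e;u)$-disjunct for every $d<(\tilde{n}-e)/((\tilde{n}-\tilde{d})u)$.
   Context: An $(\tilde{n},k,\tilde{d})_q$ code is a set of $q^k$ words of length $\tilde{n}$ over an alphabet of size $q$ with minimum pairwise Hamming distance $\tilde{d}$. For a Boolean column vector $C$, $\mathrm{supp}(C)$ is the set of positions where it is 1. A Boolean matrix (with at least $d+u$ columns) is strongly $(d,e;u)$-disjunct if for every choice of $d+u$ distinct columns $C_1,\dots,C_u,C'_1,\dots,C'_d$ we have $\big|\bigcap_{i=1}^u\mathrm{supp}(C_i)\setminus\bigcup_{i=1}^d\mathrm{supp}(C'_i)\big|>e$. *)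

From mathcomp Require Import all_boot all_order all_algebra.
Set Implicit Arguments. Unset Strict Implicit. Unset Printing Implicit Defensive.

Definition word (nt q : nat) := {ffun 'I_nt -> 'I_q}.

Definition hamming (nt q : nat) (x y : word nt q) : nat :=
  #|[set i : 'I_nt | x i != y i]|.

(* A code with q^k words of length nt over [q] and minimum distance dt,
   given as an injective enumeration of its codewords (the columns order). *)
Definition is_code (nt k dt q : nat) (cw : 'I_(q ^ k) -> word nt q) : Prop :=
  injective cw /\ (forall j j' : 'I_(q ^ k), j != j' -> dt <= hamming (cw j) (cw j')).

Definition supp (R J : finType) (M : R -> J -> bool) (c : J) : {set R} :=
  [set r | M r c].

(* Strongly (d,e;u)-disjunct: for every choice of d+u distinct columns
   C_1..C_u (f (lshift d i)) and C'_1..C'_d (f (rshift u j)),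
   |cap_i supp C_i \ cup_j supp C'_j| > e. *)
Definition strongly_disjunct (R J : finType) (M : R -> J -> bool)
    (d e u : nat) : Prop :=
  forall f : 'I_(u + d) -> J, injective f ->
    e < #|(\bigcap_(i < u) supp M (f (lshift d i)))
           :\: (\bigcup_(j < d) supp M (f (rshift u j)))|.

Definition phi (q u : nat) (x : 'I_q) (a : {ffun 'I_u -> 'I_q}) : bool :=
  [exists i : 'I_u, a i == x].

(* The concatenated matrix: m = nt * q^u rows indexed by (coordinate, u-tuple),
   n = q^k columns indexed by the codewords. *)
Definition concat_matrix (nt k q u : nat) (cw : 'I_(q ^ k) -> word nt q)
    (r : 'I_nt * {ffun 'I_u -> 'I_q}) (j : 'I_(q ^ k)) : bool :=
  phi (cw j r.1) r.2.

From mathcomp Require Import all_boot all_order all_algebra.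
From mathcomp Require Import zify.
Import GRing.Theory Num.Theory.

Set Implicit Arguments.
Unset Strict Implicit.

(* Let the chosen columns be codewords x_1..x_u (kept) and y_1..y_d
   (excluded). At every coordinate i where no y_j agrees with any x_l, the row
   (i, (x_1 i, ..., x_u i)) is 1 in every x_l and 0 in every y_j. Two distinct
   codewords agree in at most nt - dt coordinates, so at most d u (nt - dt)
   coordinates are spoiled, and the bound on d leaves more than e good ones. *)

Lemma card_bigcup_le (I T : finType) (P : pred I) (A : I -> {set T}) :
  (#|\bigcup_(i | P i) A i| <= \sum_(i | P i) #|A i|)%N.
Proof.
apply: (big_rec2 (fun (X : {set T}) s => #|X| <= s)%N); first by rewrite cards0.
move=> i X s _ leXs; rewrite cardsU.
by apply: leq_trans (leq_subr _ _) _; rewrite leq_add2l.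
Qed.

Definition agree (nt q : nat) (x y : word nt q) : {set 'I_nt} :=
  [set i | x i == y i].

Lemma card_agree_hamming (nt q : nat) (x y : word nt q) :
  (#|agree x y| + hamming x y)%N = nt.
Proof.
rewrite /hamming -[RHS](card_ord nt) -(cardsC (agree x y)).
by congr (_ + _)%N; apply: eq_card => i; rewrite !inE.
Qed.

Lemma code_card_agree (nt k dt q : nat) (cw : 'I_(q ^ k) -> word nt q)
    (j j' : 'I_(q ^ k)) :
  is_code dt cw -> j != j' -> (#|agree (cw j) (cw j')| <= nt - dt)%N.
Proof.
move=> [_ dist_cw] /dist_cw; have := card_agree_hamming (cw j) (cw j'); lia.
Qed.

Section SeparatingCoordinates.

Variables (nt q u d : nat) (x : 'I_u -> word nt q) (y : 'I_d -> word nt q).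

Definition separating_coords : {set 'I_nt} :=
  [set i | [forall j, forall l, y j i != x l i]].

Lemma card_separating_coords :
  (nt <= #|separating_coords| + \sum_(j < d) \sum_(l < u) #|agree (y j) (x l)|)%N.
Proof.
rewrite -{1}[nt](card_ord nt) -(cardsC separating_coords) leq_add2l.
have sub_agree : ~: separating_coords \subset
    \bigcup_(j < d) \bigcup_(l < u) agree (y j) (x l).
  apply/subsetP => i; rewrite !inE => /forallPn [j] /forallPn [l].
  by rewrite negbK => yx; apply/bigcupP; exists j => //; apply/bigcupP; exists l;
    rewrite ?inE.
apply: leq_trans (subset_leq_card sub_agree) _.
apply: leq_trans (card_bigcup_le _ _) _; apply: leq_sum => j _.
exact: card_bigcup_le.
Qed.

Lemma card_separating_coords_gt (b e : nat) :
  (forall j l, #|agree (y j) (x l)| <= b)%N -> (d * (b * u) + e < nt)%N ->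
  (e < #|separating_coords|)%N.
Proof.
move=> agree_le lt_nt; rewrite -(ltn_add2l (d * (b * u))).
apply: leq_trans lt_nt _; rewrite addnC.
apply: leq_trans card_separating_coords _; rewrite leq_add2l.
rewrite -[X in (_ <= X * _)%N](card_ord d) -sum_nat_const; apply: leq_sum => j _.
rewrite mulnC -[X in (_ <= X * _)%N](card_ord u) -sum_nat_const.
by apply: leq_sum => l _.
Qed.

Definition separating_row (i : 'I_nt) : 'I_nt * {ffun 'I_u -> 'I_q} :=
  (i, [ffun l => x l i]).

Lemma separating_row_inj : injective separating_row.
Proof. by move=> i i' []. Qed.

End SeparatingCoordinates.

Lemma separating_rows_sub (nt k q u d : nat) (cw : 'I_(q ^ k) -> word nt q)
    (f : 'I_(u + d) -> 'I_(q ^ k)) :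
  separating_row (fun l => cw (f (lshift d l))) @:
    separating_coords (fun l => cw (f (lshift d l))) (fun j => cw (f (rshift u j)))
  \subset
    (\bigcap_(l < u) supp (concat_matrix cw) (f (lshift d l)))
      :\: (\bigcup_(j < d) supp (concat_matrix cw) (f (rshift u j))).
Proof.
apply/subsetP => r /imsetP [i]; rewrite inE => /forallP sep_i ->.
rewrite inE; apply/andP; split.
  apply/bigcupP => -[j _]; rewrite inE /concat_matrix /phi /=.
  case/existsP => l; rewrite ffunE => /eqP yx.
  by move/forallP/(_ l): (sep_i j); rewrite yx eqxx.
apply/bigcapP => l _; rewrite inE /concat_matrix /phi /=.
by apply/existsP; exists l; rewrite ffunE.
Qed.

Local Open Scope ring_scope.

Lemma nat_of_rat_bound (nt dt u d e : nat) :
  (0 < u)%N -> dt%:Q < nt%:Q ->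
  d%:Q < (nt%:Q - e%:Q) / ((nt%:Q - dt%:Q) * u%:Q) ->
  (d * ((nt - dt) * u) + e < nt)%N.
Proof.
move=> u_gt0; rewrite ltr_nat => dt_lt_nt.
rewrite -[nt%:Q - dt%:Q]natrB ?(ltnW dt_lt_nt) // -natrM ltr_pdivlMr; last first.
  by rewrite ltr0n muln_gt0 subn_gt0 dt_lt_nt.
by rewrite -natrM ltrBrDr -natrD ltr_nat.
Qed.

Theorem mainTheorem13 (nt k dt q u : nat) (cw : 'I_(q ^ k) -> word nt q)
  (Hcode : is_code dt cw) (Hu : (0 < u)%N) (d e : nat)
  (Hd : d%:Q < (nt%:Q - e%:Q) / ((nt%:Q - dt%:Q) * u%:Q))
  (Hden : dt%:Q < nt%:Q) :
  strongly_disjunct (@concat_matrix nt k q u cw) d e u.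
Proof.
move=> f inj_f.
pose x l := cw (f (lshift d l)); pose y j := cw (f (rshift u j)).
apply: leq_trans (subset_leq_card (separating_rows_sub cw f)).
rewrite -/x -/y card_imset; last exact: separating_row_inj.
apply: (card_separating_coords_gt (b := nt - dt)); last exact: nat_of_rat_bound Hu Hden Hd.
move=> j l; apply: code_card_agree Hcode _; apply/eqP => /inj_f/(congr1 val) /=.
by have := ltn_ord l; lia.
Qed.
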